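(* Let $K$ be a commutative domain, $n\in\mathbb{N}_*$, $B$ a polynomial $K$-algebra in $n$ indeterminates, and $A$ the $K$-subalgebra of $B$ generated by $n$ elements $F_1,\dots,F_n\in B$ that are algebraically independent over $K$. Then the separable degree $[B_*^{-1}B:A_*^{-1}A]_s$ of the field extension $A_*^{-1}A\subset B_*^{-1}B$ is at most $\prod_{1\le i\le n}\deg F_i$.
   Context: For a domain $R$, $R_*=R\setminus\{0\}$ and $R_*^{-1}R$ denotes its field of fractions; $\mathbb{N}_*=\mathbb{N}\setminus\{0\}$. $[L:M]_s$ denotes the separable degree of a field extension $M\subset L$. *)

From HB Require Import structures.
From mathcomp Require Import all_boot all_order all_algebra.
From mathcomp Require Import all_field.
From mathcomp.multinomials Require Import mpoly.
Set Implicit Arguments. Unset Strict Implicit. Unset Printing Implicit Defensive.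
Import Order.TTheory GRing.Theory Num.Theory.
Local Open Scope ring_scope.

Notation fracB K n := {fraction {mpoly K[n]}}.

Definition alg_indep (K : idomainType) (n : nat) (F : n.-tuple {mpoly K[n]}) :=
  forall P : {mpoly K[n]}, P \mPo F = 0 -> P = 0.

Definition in_subalg (K : idomainType) (n : nat) (F : n.-tuple {mpoly K[n]})
  (b : {mpoly K[n]}) : Prop := exists P : {mpoly K[n]}, b = P \mPo F.

Definition in_fracA (K : idomainType) (n : nat) (F : n.-tuple {mpoly K[n]})
  (z : fracB K n) : Prop :=
  exists a b : {mpoly K[n]}, [/\ in_subalg F a, in_subalg F b, b != 0 &
    z = (tofrac a) / (tofrac b)].

Definition separable_over (L : fieldType) (M : L -> Prop) (x : L) : Prop :=
  exists p : {poly L}, [/\ forall i, M p`_i, p != 0, root p x & separable_poly p].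

Definition lin_indep_over (L : fieldType) (M : L -> Prop) (m : nat) (x : 'I_m -> L) :=
  forall c : 'I_m -> L, (forall i, M (c i)) ->
    \sum_(i < m) c i * x i = 0 -> forall i, c i = 0.

(* [L : M]_s <= D : the separable closure of M in L has dimension <= D over M,
   i.e. every M-linearly independent family of elements of L that are
   separable over M has at most D members. *)
Definition sep_degree_le (L : fieldType) (M : L -> Prop) (D : nat) : Prop :=
  forall (m : nat) (x : 'I_m -> L), (forall i, separable_over M (x i)) ->
    lin_indep_over M x -> (m <= D)%N.

(* total degree of a multivariate polynomial (msize p = 1 + deg p) *)
Definition tdeg (K : idomainType) (n : nat) (p : {mpoly K[n]}) : nat := (msize p).-1.

From HB Require Import structures.
From mathcomp Require Import all_boot all_order all_algebra.
From mathcomp Require Import all_field.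
From mathcomp.multinomials Require Import mpoly.
From mathcomp Require Import zify ring.
Set Implicit Arguments. Unset Strict Implicit. Unset Printing Implicit Defensive.
Import Order.TTheory GRing.Theory Num.Theory.
Local Open Scope ring_scope.

(* Clearing denominators gives
   y_1..y_m in B free over A = K[F].  With d_i = deg F_i, the products
   F^b * y_j with sum_i d_i b_i <= t are then K-linearly independent of degree
   <= t + e, so m * #{b | sum_i d_i b_i <= t} <= #{a | |a| <= t + e}.  Division
   with remainder by the d_i gives #{a | |a| <= s} <= D * #{b | sum_i d_i b_i <= s}
   with D = prod_i d_i; iterating, m ^ k <= D ^ k * (k e + 1) ^ n for all k,
   which forces m <= D. *)

Section ExponentialGrowth.
Local Open Scope nat_scope.

Lemma expn_leq_ffact j z : z.+1 ^ j <= (z + j) ^_ j.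
Proof.
elim: j => [|j IH]; first by rewrite expn0 ffactn0.
by rewrite expnS addnS ffactnS leq_mul // ltnS leq_addr.
Qed.

(* If D < m then m ^ k >= (D + 1) ^ k >= 'C(k, p.+1) * D ^ (k - p.+1), which
   grows like k ^ p.+1 * D ^ k; k := p.+1 + C is large enough. *)
Lemma leq_of_exp_leq_poly m D e p : 0 < D ->
  (forall k, m ^ k <= D ^ k * (k * e + 1) ^ p) -> m <= D.
Proof.
move=> D_gt0 growth; rewrite leqNgt; apply/negP => ltDm.
pose E := p.+1 * e + 1.
pose C := p.+1`! * D ^ p.+1 * E ^ p.
pose k := p.+1 + C.
have kp : p.+1 <= k by rewrite leq_addr.
have binom_leq : 'C(k, p.+1) * D ^ (k - p.+1) <= D ^ k * (k * e + 1) ^ p.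
  apply: leq_trans (growth k); apply: leq_trans (_ : (D + 1) ^ k <= _).
    rewrite expnDn (bigD1 (Ordinal (kp : p.+1 < k.+1))) //= exp1n muln1.
    exact: leq_addr.
  by rewrite leq_exp2r ?addn1 // (leq_trans _ kp).
have {binom_leq} binom_leq : 'C(k, p.+1) <= D ^ p.+1 * (k * e + 1) ^ p.
  have DkE : D ^ k = D ^ (k - p.+1) * D ^ p.+1 by rewrite -expnD subnK.
  by rewrite DkE -mulnA mulnC leq_pmul2l ?expn_gt0 ?D_gt0 in binom_leq.
have poly_leq : (k * e + 1) ^ p <= C.+1 ^ p * E ^ p.
  rewrite -expnMn; have [->|p_gt0] := posnP p; first by [].
  by rewrite leq_exp2r // /k /E; nia.
have : C.+1 ^ p.+1 <= C * C.+1 ^ p.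
  apply: leq_trans (expn_leq_ffact _ _) _; rewrite addnC -bin_ffact.
  apply: leq_trans (leq_mul binom_leq (leqnn _)) _.
  apply: leq_trans (leq_mul (leq_mul (leqnn _) poly_leq) (leqnn _)) _.
  by apply/eq_leq; rewrite /C; ring.
by rewrite expnS leq_pmul2r ?expn_gt0 // ltnn.
Qed.
End ExponentialGrowth.

Section MonomialCounting.
Local Open Scope nat_scope.
Variables (n : nat) (d : 'I_n -> nat).

Definition wdeg (m : 'X_{1..n}) := \sum_i d i * m i.

Definition wdeg_le s : pred 'X_{1..n < s.+1} := [pred b : 'X_{1..n < s.+1} | wdeg b <= s].
Arguments wdeg_le s : clear implicits.

Lemma card_bmnm_leq s : #|{: 'X_{1..n < s.+1}}| <= s.+1 ^ n.
Proof.
pose f (m : 'X_{1..n < s.+1}) : {ffun 'I_n -> 'I_s.+1} := [ffun i => inord (m i)].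
rewrite -[s.+1 in X in _ <= X]card_ord -[n in X in _ <= X]card_ord -card_ffun.
apply: (leq_card f) => m1 m2 /ffunP f12; apply/val_inj/mnmP => i.
have m_small (m : 'X_{1..n < s.+1}) : m i < s.+1.
  by apply: leq_ltn_trans (bmdeg m); rewrite mdegE (bigD1 i) //= leq_addr.
by have := congr1 val (f12 i); rewrite !ffunE /= !inordK.
Qed.

Lemma card_wdeg_le0_gt0 : 0 < #|wdeg_le 0|.
Proof.
apply/card_gt0P; exists bm0; rewrite inE /= /wdeg.
by rewrite big1 // => i _; rewrite mnm0E muln0.
Qed.

Hypothesis d_gt0 : forall i, 0 < d i.

(* Coordinatewise Euclidean division a i = d i * q i + r i is injective in
   (q, r), and wdeg q <= mdeg a. *)
Lemma card_bmnm_leq_wdeg s :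
  #|{: 'X_{1..n < s.+1}}| <= (\prod_i d i) * #|wdeg_le s|.
Proof.
pose R := {dffun forall i, 'I_(d i)}.
have card_R : #|R| = \prod_i d i.
  by rewrite card_dep_ffun foldrE big_map big_enum; apply: eq_bigr => i _; rewrite card_ord.
pose q (a : 'X_{1..n < s.+1}) : 'X_{1..n < s.+1} := insubd a [multinom a i %/ d i | i < n].
have qE a i : q a i = a i %/ d i.
  rewrite /q insubdK ?mnmE // -topredE /= mdegE (leq_ltn_trans _ (bmdeg a)) //.
  by rewrite mdegE leq_sum // => j _; rewrite mnmE leq_div.
pose r (a : 'X_{1..n < s.+1}) : R := [ffun i => Ordinal (ltn_pmod (a i) (d_gt0 i))].
pose g a := (q a, r a).
have g_inj : injective g.
  move=> a1 a2 [/(congr1 val) q12 /ffunP r12]; apply/val_inj/mnmP => i.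
  have := congr1 (fun m : 'X_{1..n} => m i) q12; rewrite /= !qE => qi.
  have := congr1 val (r12 i); rewrite !ffunE /= => ri.
  by rewrite (divn_eq (a1 i) (d i)) (divn_eq (a2 i) (d i)) qi ri.
rewrite -(card_imset _ g_inj) mulnC -card_R -[#|wdeg_le s|]cardsE -cardsT -cardsX.
apply/subset_leq_card/subsetP => _ /imsetP [a _ ->]; rewrite !inE andbT.
rewrite -ltnS; apply: leq_ltn_trans (bmdeg a); rewrite mdegE leq_sum // => i _.
by rewrite qE mulnC leq_trunc_div.
Qed.

Lemma leq_prod_of_card_wdeg_le m e :
  (forall t, m * #|wdeg_le t| <= #|{: 'X_{1..n < (t + e).+1}}|) ->
  m <= \prod_i d i.
Proof.
move=> card_leq; set D := \prod_i d i.
have D_gt0 : 0 < D by rewrite prodn_gt0.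
have iter_leq k : m ^ k * #|wdeg_le 0| <= D ^ k * #|wdeg_le (k * e)|.
  elim: k => [|k IH]; first by rewrite !expn0.
  rewrite expnS -mulnA (leq_trans (leq_mul (leqnn m) IH)) // mulnCA.
  rewrite (leq_trans (leq_mul (leqnn _) (card_leq _))) // expnS -mulnA mulnCA.
  by rewrite leq_mul // mulSnr card_bmnm_leq_wdeg.
apply: (leq_of_exp_leq_poly (e := e) (p := n) D_gt0) => k.
rewrite -(leq_pmul2r (card_wdeg_le0_gt0)) (leq_trans (iter_leq k)) //.
rewrite -mulnA leq_mul // addn1.
apply: leq_trans (max_card _) (leq_trans (card_bmnm_leq _) _).
by rewrite leq_pmulr ?card_wdeg_le0_gt0.
Qed.
End MonomialCounting.
Arguments wdeg_le {n} d s.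

Section FractionField.
Variable R : idomainType.

Lemma tofrac_mul_den (x : {fraction R}) :
  exists2 b : R, b != 0 & exists a : R, x * tofrac b = tofrac a.
Proof.
elim/quotW: x => r; exists (\d_r); first exact: denom_ratioP.
exists (\n_r); unlock tofrac; rewrite !piE; apply/eqmodP.
rewrite /= FracField.equivfE /FracField.mulf.
by rewrite !numden_Ratio ?mulf_neq0 ?oner_neq0 ?denom_ratioP // !mulr1 mulrC.
Qed.

Lemma tofrac_common_den (I : finType) (v : I -> {fraction R}) :
  exists2 b : R, b != 0 & exists a : I -> R, forall i, v i * tofrac b = tofrac (a i).
Proof.
have [b b_neq0 /fin_all_exists [a ab]] := fin_all_exists2 (fun i => tofrac_mul_den (v i)).
exists (\prod_i b i); first by apply/prodf_neq0 => i _.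
exists (fun i => a i * \prod_(j | j != i) b j) => i.
by rewrite (bigD1 i) //= rmorphM /= mulrA ab tofracM.
Qed.

(* The rows of [A] stay free over the fraction field, since a rational
   dependency clears to an integral one. *)
Lemma card_leq_of_free_rows (I J : finType) (A : I -> J -> R) :
  (forall c : I -> R, (forall j, \sum_i c i * A i j = 0) -> forall i, c i = 0) ->
  (#|I| <= #|J|)%N.
Proof.
move=> A_free.
pose M : 'M[{fraction R}]_(#|I|, #|J|) :=
  \matrix_(i, j) tofrac (A (enum_val i) (enum_val j)).
suff : row_free M by rewrite -row_leq_rank => /leq_trans; apply; exact: rank_leq_col.
rewrite -kermx_eq0; apply/rowV0P => v /sub_kermxP vM0; apply/rowP => i0.
have [b b_neq0 [a ab]] := tofrac_common_den (fun i => v ord0 (enum_rank i)).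
have a0 : forall i, a i = 0.
  apply: A_free => j; apply/eqP; rewrite -tofrac_eq0 rmorph_sum /=; apply/eqP.
  have := congr1 (fun w : 'rV_#|J| => w ord0 (enum_rank j) * tofrac b) vM0.
  rewrite !mxE mul0r big_distrl /= (reindex enum_rank) /=; last first.
    by exists enum_val => i _; rewrite ?enum_rankK ?enum_valK.
  move=> e; rewrite -[RHS]e; apply: eq_bigr => i _.
  by rewrite tofracM -ab !mxE !enum_rankK mulrAC.
have := ab (enum_val i0); rewrite enum_valK a0 tofrac0 mxE => /eqP.
by rewrite mulf_eq0 tofrac_eq0 (negbTE b_neq0) orbF => /eqP.
Qed.
End FractionField.

Section TotalDegree.
Variables (K : idomainType) (n : nat).
Implicit Types p q : {mpoly K[n]}.

Lemma tdeg0 : tdeg (0 : {mpoly K[n]}) = 0%N.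
Proof. by rewrite /tdeg msize0. Qed.

Lemma tdegM p q : (tdeg (p * q) <= tdeg p + tdeg q)%N.
Proof.
have [->|p_neq0] := eqVneq p 0; first by rewrite mul0r tdeg0.
have [->|q_neq0] := eqVneq q 0; first by rewrite mulr0 tdeg0.
have := msize_poly_eq0 p; have := msize_poly_eq0 q.
by rewrite /tdeg msizeM // (negbTE p_neq0) (negbTE q_neq0); lia.
Qed.

Lemma tdegX p k : (tdeg (p ^+ k) <= k * tdeg p)%N.
Proof.
elim: k => [|k IH]; first by rewrite expr0 /tdeg msize1.
by rewrite exprS mulSn (leq_trans (tdegM _ _)) ?leq_add.
Qed.

Lemma mcoeff_eq0_tdeg_lt p (m : 'X_{1..n}) : (tdeg p < mdeg m)%N -> p@_m = 0.
Proof. by move=> lt_pm; apply/memN_msupp_eq0/msize_mdeg_ge; rewrite /tdeg in lt_pm; lia. Qed.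

Lemma tdeg_comp_mpolyX (F : n.-tuple {mpoly K[n]}) (b : 'X_{1..n}) :
  (tdeg ('X_[b] \mPo F) <= wdeg (fun i => tdeg (tnth F i)) b)%N.
Proof.
rewrite comp_mpolyX; apply: (big_ind2 (fun p k => tdeg p <= k)%N).
- by rewrite /tdeg msize1.
- by move=> p1 k1 p2 k2 le1 le2; apply: leq_trans (tdegM _ _) (leq_add le1 le2).
- by move=> i _; rewrite mulnC tdegX.
Qed.

(* The coefficient maps [p |-> p@_a], for mdeg a <= s, are jointly injective on
   polynomials of total degree <= s. *)
Lemma card_leq_of_free_tdeg_le (I : finType) (G : I -> {mpoly K[n]}) s :
  (forall i, tdeg (G i) <= s)%N ->
  (forall c : I -> K, \sum_i c i *: G i = 0 -> forall i, c i = 0) ->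
  (#|I| <= #|{: 'X_{1..n < s.+1}}|)%N.
Proof.
move=> G_tdeg G_free.
apply: (card_leq_of_free_rows (A := fun i (a : 'X_{1..n < s.+1}) => (G i)@_a)).
move=> c c_coef; apply: G_free; apply/mpolyP => m; rewrite mcoeff0 raddf_sum /=.
have [le_ms|lt_sm] := leqP (mdeg m) s.
  rewrite -[RHS](c_coef (BMultinom (le_ms : (mdeg m < s.+1)%N))).
  by apply: eq_bigr => i _; rewrite mcoeffZ.
rewrite big1 // => i _; rewrite mcoeffZ mcoeff_eq0_tdeg_lt ?mulr0 //.
exact: leq_ltn_trans (G_tdeg i) lt_sm.
Qed.

End TotalDegree.

Section CompositionFree.
Variables (K : idomainType) (n : nat) (F : n.-tuple {mpoly K[n]}).

Definition comp_free m (y : 'I_m -> {mpoly K[n]}) :=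
  forall P : 'I_m -> {mpoly K[n]}, \sum_j (P j \mPo F) * y j = 0 -> forall j, P j = 0.

Lemma tdeg_gt0_alg_indep : alg_indep F -> forall i, (0 < tdeg (tnth F i))%N.
Proof.
move=> F_indep i; rewrite lt0n; apply/negP => /eqP tdeg0F.
have F_const : tnth F i = ((tnth F i)@_0)%:MP.
  by apply: msize1_polyC; rewrite /tdeg in tdeg0F; lia.
have /F_indep/eqP : ('X_i - ((tnth F i)@_0)%:MP) \mPo F = 0.
  by rewrite comp_mpolyB comp_mpolyXU comp_mpolyC -tnth_nth -F_const subrr.
rewrite subr_eq0 => /eqP /(congr1 (mcoeff U_(i))).
rewrite mcoeffXU eqxx mcoeffC -mdeg_eq0 mdeg1 mulr0.
exact/eqP/oner_neq0.
Qed.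

Lemma comp_free_of_lin_indep_over m (x : 'I_m -> fracB K n) b y :
  alg_indep F -> lin_indep_over (in_fracA F) x -> b != 0 ->
  (forall j, x j * tofrac b = tofrac (y j)) -> comp_free y.
Proof.
move=> F_indep x_indep b_neq0 xy P Py0 j; apply: F_indep; apply/eqP.
rewrite -tofrac_eq0; apply/eqP; move: j; apply: x_indep.
  move=> j; exists (P j \mPo F), 1; split; first by exists (P j).
  - by exists 1; rewrite comp_mpoly1.
  - exact: oner_neq0.
  - by rewrite tofrac1 divr1.
apply: (mulIf (_ : tofrac b != 0)); first by rewrite tofrac_eq0.
rewrite mul0r big_distrl /= -[RHS]tofrac0 -Py0 rmorph_sum /=.
by apply: eq_bigr => j _; rewrite -mulrA xy tofracM.
Qed.

Lemma free_comp_mpolyX_mul m (y : 'I_m -> {mpoly K[n]}) t (S : pred 'X_{1..n < t.+1}) :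
  comp_free y -> forall c : 'I_m * {b | S b} -> K,
  \sum_p c p *: (('X_[val (val p.2)] \mPo F) * y p.1) = 0 -> forall p, c p = 0.
Proof.
move=> y_free c c_rel [j b].
pose P j := \sum_(b : {b | S b}) c (j, b) *: 'X_[val (val b)].
have /(congr1 (mcoeff (val (val b)))) : P j = 0.
  apply: y_free; rewrite -{}[RHS]c_rel.
  rewrite (eq_bigr (fun j => \sum_b c (j, b) *: (('X_[val (val b)] \mPo F) * y j))).
    by rewrite pair_bigA; apply: eq_bigr => -[].
  move=> j' _; rewrite /P raddf_sum /= mulr_suml; apply: eq_bigr => b' _.
  by rewrite comp_mpolyZ scalerAl.
rewrite mcoeff0 raddf_sum (bigD1 b) //= mcoeffZ mcoeffX eqxx mulr1 big1 ?addr0 //.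
by move=> b' /negbTE b'b; rewrite mcoeffZ mcoeffX !val_eqE b'b mulr0.
Qed.

End CompositionFree.

Theorem mainTheorem4 (K : idomainType) (n : nat) (F : n.-tuple {mpoly K[n]}) :
  (0 < n)%N -> alg_indep F ->
  sep_degree_le (in_fracA F) (\prod_(i < n) tdeg (tnth F i))%N.
Proof.
move=> _ F_indep m x _ x_indep.
have [b b_neq0 [y xy]] := tofrac_common_den x.
have y_free := comp_free_of_lin_indep_over F_indep x_indep b_neq0 xy.
pose e := (\max_j tdeg (y j))%N.
apply: (leq_prod_of_card_wdeg_le (e := e) (tdeg_gt0_alg_indep F_indep)) => t.
pose G (p : 'I_m * {a | wdeg_le (fun i => tdeg (tnth F i)) t a}) :=
  ('X_[val (val p.2)] \mPo F) * y p.1.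
apply: leq_trans (card_leq_of_free_tdeg_le (G := G) _ _).
- by rewrite card_prod card_ord card_sig.
- move=> [j [a a_wdeg]]; rewrite (leq_trans (tdegM _ _)) // leq_add //.
    exact: leq_trans (tdeg_comp_mpolyX _ _) a_wdeg.
  exact: leq_bigmax.
- exact: free_comp_mpolyX_mul.
Qed.
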